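(* For every P/T net with silent moves $N=(S,A,T)$ and all markings $m_1,m_2$, if $m_1\approx_p m_2$ then $m_1\approx_{bri} m_2$.
   Context: A P/T net with silent moves is $N=(S,A,T)$: $S$ a finite set of places, $A$ a finite set of labels containing the silent label $\tau$, $T\subseteq(\mathcal{M}(S)\setminus\{\theta\})\times A\times\mathcal{M}(S)$ a finite set of transitions ($\mathcal{M}(S)$ the finite multisets over $S$, $\theta$ empty, $\oplus$ union, $\ominus$ truncated difference). For $t=(m,\ell,m')$: ${}^\bullet t=m$, $l(t)=\ell$, $t^\bullet=m'$. $m[t\rangle m'$ iff ${}^\bullet t\subseteq m$ and $m'=(m\ominus{}^\bullet t)\oplus t^\bullet$; firing sequences by concatenation; $o(\sigma)$ is the subsequence of non-$\tau$ labels of $\sigma$. Idling transitions: $i(s)=(s,\tau,s)$ for $s\in S$ (not in $T$, usable in silent sequences, firing by the same rule). A transition is $\tau$-sequential if $l(t)=\tau$ and $|{}^\bullet t|=|t^\bullet|=1$. Pre/post-sets of sequences: ${}^\bullet\epsilon=\theta$, ${}^\bullet(t\sigma)={}^\bullet t\oplus({}^\bullet\sigma\ominus t^\bullet)$, $\epsilon^\bullet=\theta$, $(t\sigma)^\bullet=\sigma^\bullet\oplus(t^\bullet\ominus{}^\bullet\sigma)$. A sequence $\sigma=t_1\dots t_n$ ($n\ge1$, $t_i$ in $T$ or idling) is $\tau$-1-sequential if each $t_i$ has label $\tau$ and singleton pre- and post-set and $t_i^\bullet={}^\bullet t_{i+1}$; $\sigma=\sigma_1\cdots\sigma_k$ is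 $\tau$-$k$-sequential if each $\sigma_i$ is $\tau$-1-sequential, ${}^\bullet\sigma=\bigoplus_i{}^\bullet\sigma_i$, $\sigma^\bullet=\bigoplus_i\sigma_i^\bullet$; $\sigma$ is $\tau$-sequential if $\tau$-$k$-sequential for some $k\ge1$. For $\tau$-sequential $\sigma=t_1\dots t_n$ with ${}^\bullet\sigma=m_0[t_1\rangle m_1\cdots[t_n\rangle m_n=\sigma^\bullet$ and a marking relation $Q$: $\Psi(m,\sigma,Q)$ iff $(m,m_i)\in Q$ for $i=0,\dots,n-1$; $\Phi(\sigma,m,Q)$ iff $(m_i,m)\in Q$ for $i=0,\dots,n-1$. Additive closure of $R\subseteq S\times S$: the least $R^\oplus$ with $(\theta,\theta)\in R^\oplus$ and, if $(s_1,s_2)\in R$, $(m_1,m_2)\in R^\oplus$, then $(s_1\oplus m_1,s_2\oplus m_2)\in R^\oplus$. A branching place bisimulation is $R\subseteq S\times S$ such that whenever $(m_1,m_2)\in R^\oplus$: (1) for every $t_1$ with $m_1[t_1\rangle m_1'$: (i) either $t_1$ is $\tau$-sequential and there are $\sigma,m_2'$ with $\sigma$ $\tau$-sequential, $m_2[\sigma\rangle m_2'$, $\Psi({}^\bullet t_1,\sigma,R^\oplus)$, $({}^\bullet t_1,\sigma^\bullet)\in R^\oplus$, $(t_1^\bullet,\sigma^\bullet)\in R^\oplus$, $(m_1\ominus{}^\bullet t_1,m_2\ominus{}^\bullet\sigma)\in R^\oplus$; (ii) or there are $\sigma,t_2,m,m_2'$ with $\sigma$ $\tau$-sequential, $m_2[\sigma\rangle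 m[t_2\rangle m_2'$, $\sigma^\bullet={}^\bullet t_2$, $l(t_1)=l(t_2)$, $\Psi({}^\bullet t_1,\sigma,R^\oplus)$, $({}^\bullet t_1,\sigma^\bullet)\in R^\oplus$, $(t_1^\bullet,t_2^\bullet)\in R^\oplus$, $(m_1\ominus{}^\bullet t_1,m_2\ominus{}^\bullet\sigma)\in R^\oplus$; (2) symmetrically for every $t_2$ with $m_2[t_2\rangle m_2'$ (matching sequence fired from $m_1$, $\Phi(\sigma,{}^\bullet t_2,R^\oplus)$ in place of $\Psi$, pairs with the $m_1$-side first). $m_1\approx_p m_2$ iff $(m_1,m_2)\in R^\oplus$ for some branching place bisimulation $R$. A branching interleaving bisimulation is $R'\subseteq\mathcal{M}(S)\times\mathcal{M}(S)$ such that whenever $(m_1,m_2)\in R'$: for every $t_1\in T$ with $m_1[t_1\rangle m_1'$, either $l(t_1)=\tau$ and there is a sequence $\sigma_2$ of transitions of $T$ with $o(\sigma_2)=\epsilon$, $m_2[\sigma_2\rangle m_2'$, $(m_1,m_2')\in R'$, $(m_1',m_2')\in R'$, or there are $\sigma,t_2$ with $o(\sigma)=\epsilon$, $l(t_1)=l(t_2)$, $m_2[\sigma\rangle m[t_2\rangle m_2'$, $(m_1,m)\in R'$, $(m_1',m_2')\in R'$; and symmetrically for $m_2$. $\approx_{bri}$ is the union of all branching interleaving bisimulations. *)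

From mathcomp Require Import all_boot.
Set Implicit Arguments.
Unset Strict Implicit.
Unset Printing Implicit Defensive.

Definition mset (S : finType) := {ffun S -> nat}.

Section Multisets.
Variable S : finType.
Definition mset0 : mset S := [ffun _ => 0].
Definition msingle (s : S) : mset S := [ffun x => nat_of_bool (x == s)].
Definition madd (m1 m2 : mset S) : mset S := [ffun x => m1 x + m2 x].
(* truncated difference *)
Definition msub (m1 m2 : mset S) : mset S := [ffun x => m1 x - m2 x].
Definition msubset (m1 m2 : mset S) : Prop := forall x, m1 x <= m2 x.
Definition msize (m : mset S) : nat := \sum_(x : S) m x.
End Multisets.

Definition trans (S A : finType) := (mset S * A * mset S)%type.
Definition pre (S A : finType) (t : trans S A) : mset S := t.1.1.
Definition lab (S A : finType) (t : trans S A) : A := t.1.2.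
Definition post (S A : finType) (t : trans S A) : mset S := t.2.

(* A P/T net with silent moves is given by places S (finType), labels A
   (finType) with a silent label tau, and a finite set of transitions T
   (a seq of triples) whose pre-sets are nonempty. *)
Definition is_net (S A : finType) (T : seq (trans S A)) : Prop :=
  forall t, t \in T -> pre t != mset0 S.

Section Net.
Variables (S A : finType) (tau : A) (T : seq (trans S A)).

Definition idling (s : S) : trans S A := (msingle s, tau, msingle s).
Definition T_or_idle (t : trans S A) : Prop := t \in T \/ exists s, t = idling s.

Definition fire (m : mset S) (t : trans S A) (m' : mset S) : Prop :=
  msubset (pre t) m /\ m' = madd (msub m (pre t)) (post t).

Fixpoint fires (m : mset S) (sigma : seq (trans S A)) (m' : mset S) : Prop :=
  match sigma with
  | [::] => m' = m
  | t :: sigma' => exists m'', fire m t m'' /\ fires m'' sigma' m'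
  end.

Fixpoint spre (sigma : seq (trans S A)) : mset S :=
  match sigma with
  | [::] => mset0 S
  | t :: sigma' => madd (pre t) (msub (spre sigma') (post t))
  end.
Fixpoint spost (sigma : seq (trans S A)) : mset S :=
  match sigma with
  | [::] => mset0 S
  | t :: sigma' => madd (spost sigma') (msub (post t) (spre sigma'))
  end.

Definition tau_seq_trans (t : trans S A) : Prop :=
  lab t = tau /\ msize (pre t) = 1 /\ msize (post t) = 1.

Definition tau1seq (sigma : seq (trans S A)) : Prop :=
  sigma <> [::] /\
  (forall t, t \in sigma -> T_or_idle t /\ tau_seq_trans t) /\
  sorted (fun t t' => post t == pre t') sigma.

Definition taukseq (k : nat) (sigma : seq (trans S A)) : Prop :=
  exists sigmas : seq (seq (trans S A)),
    size sigmas = k /\ sigma = flatten sigmas /\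
    (forall s, s \in sigmas -> tau1seq s) /\
    spre sigma = foldr (fun s acc => madd (spre s) acc) (mset0 S) sigmas /\
    spost sigma = foldr (fun s acc => madd (spost s) acc) (mset0 S) sigmas.

Definition tauseq (sigma : seq (trans S A)) : Prop :=
  exists k, 1 <= k /\ taukseq k sigma.

Definition step (m : mset S) (t : trans S A) : mset S :=
  madd (msub m (pre t)) (post t).
Definition mark_at (sigma : seq (trans S A)) (i : nat) : mset S :=
  foldl step (spre sigma) (take i sigma).

Definition Psi (m : mset S) (sigma : seq (trans S A))
    (Q : mset S -> mset S -> Prop) : Prop :=
  forall i, i < size sigma -> Q m (mark_at sigma i).
Definition Phi (sigma : seq (trans S A)) (m : mset S)
    (Q : mset S -> mset S -> Prop) : Prop :=
  forall i, i < size sigma -> Q (mark_at sigma i) m.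

Inductive addclos (R : S -> S -> Prop) : mset S -> mset S -> Prop :=
| addclos0 : addclos R (mset0 S) (mset0 S)
| addclosS s1 s2 m1 m2 :
    R s1 s2 -> addclos R m1 m2 ->
    addclos R (madd (msingle s1) m1) (madd (msingle s2) m2).

Definition branching_place_bisim (R : S -> S -> Prop) : Prop :=
  forall m1 m2, addclos R m1 m2 ->
  (forall t1 m1', t1 \in T -> fire m1 t1 m1' ->
     (tau_seq_trans t1 /\
      exists sigma m2', tauseq sigma /\ fires m2 sigma m2' /\
        Psi (pre t1) sigma (addclos R) /\
        addclos R (pre t1) (spost sigma) /\
        addclos R (post t1) (spost sigma) /\
        addclos R (msub m1 (pre t1)) (msub m2 (spre sigma)))
     \/
     (exists sigma t2 m m2', tauseq sigma /\ t2 \in T /\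
        fires m2 sigma m /\ fire m t2 m2' /\
        spost sigma = pre t2 /\ lab t1 = lab t2 /\
        Psi (pre t1) sigma (addclos R) /\
        addclos R (pre t1) (spost sigma) /\
        addclos R (post t1) (post t2) /\
        addclos R (msub m1 (pre t1)) (msub m2 (spre sigma)))) /\
  (forall t2 m2', t2 \in T -> fire m2 t2 m2' ->
     (tau_seq_trans t2 /\
      exists sigma m1', tauseq sigma /\ fires m1 sigma m1' /\
        Phi sigma (pre t2) (addclos R) /\
        addclos R (spost sigma) (pre t2) /\
        addclos R (spost sigma) (post t2) /\
        addclos R (msub m1 (spre sigma)) (msub m2 (pre t2)))
     \/
     (exists sigma t1 m m1', tauseq sigma /\ t1 \in T /\
        fires m1 sigma m /\ fire m t1 m1' /\
        spost sigma = pre t1 /\ lab t1 = lab t2 /\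
        Phi sigma (pre t2) (addclos R) /\
        addclos R (spost sigma) (pre t2) /\
        addclos R (post t1) (post t2) /\
        addclos R (msub m1 (spre sigma)) (msub m2 (pre t2)))).

Definition place_bisimilar (m1 m2 : mset S) : Prop :=
  exists R, branching_place_bisim R /\ addclos R m1 m2.

Definition silent_T_seq (sigma : seq (trans S A)) : Prop :=
  (forall t, t \in sigma -> t \in T) /\ all (fun t => lab t == tau) sigma.

Definition branching_interleaving_bisim (R : mset S -> mset S -> Prop) : Prop :=
  forall m1 m2, R m1 m2 ->
  (forall t1 m1', t1 \in T -> fire m1 t1 m1' ->
     (lab t1 = tau /\ exists sigma2 m2', silent_T_seq sigma2 /\
        fires m2 sigma2 m2' /\ R m1 m2' /\ R m1' m2')
     \/
     (exists sigma t2 m m2', silent_T_seq sigma /\ t2 \in T /\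
        lab t1 = lab t2 /\ fires m2 sigma m /\ fire m t2 m2' /\
        R m1 m /\ R m1' m2')) /\
  (forall t2 m2', t2 \in T -> fire m2 t2 m2' ->
     (lab t2 = tau /\ exists sigma1 m1', silent_T_seq sigma1 /\
        fires m1 sigma1 m1' /\ R m1' m2 /\ R m1' m2')
     \/
     (exists sigma t1 m m1', silent_T_seq sigma /\ t1 \in T /\
        lab t1 = lab t2 /\ fires m1 sigma m /\ fire m t1 m1' /\
        R m m2 /\ R m1' m2')).

Definition bri_bisimilar (m1 m2 : mset S) : Prop :=
  exists R, branching_interleaving_bisim R /\ R m1 m2.

End Net.

From mathcomp Require Import all_boot.
From mathcomp Require Import zify.

Set Implicit Arguments.
Unset Strict Implicit.
Unset Printing Implicit Defensive.

(* Given a branching place bisimulation R, its additive closure R^+ is itself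
   a branching interleaving bisimulation.  The argument is local and additive:
   a transition t1 fired from m1 = (m1 - pre t1) + pre t1 is matched, as in the
   place bisimulation, by a tau-sequential sequence sigma (possibly followed by
   t2) fired from m2; the reached markings are residual + post-set on both
   sides, so R^+ relates them because R^+ is closed under multiset sum.  The
   idling transitions occurring in sigma do not change the marking, so
   dropping them leaves a silent sequence of genuine transitions of the net.

   Both branching bisimulations are symmetric in their two
   clauses, so the theorem follows by applying the transfer argument to R and
   to its converse. *)

Section Multisets.
Variable S : finType.

Lemma madd_msubK (p m : mset S) : msubset p m -> madd (msub m p) p = m.
Proof. by move=> le_pm; apply/ffunP=> x; rewrite !ffunE; have := le_pm x; lia. Qed.

Lemma msub_maddK (r p : mset S) : msub (madd r p) p = r.
Proof. by apply/ffunP=> x; rewrite !ffunE; lia. Qed.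

Lemma madd0m (m : mset S) : madd (mset0 S) m = m.
Proof. by apply/ffunP=> x; rewrite !ffunE. Qed.

Lemma maddA (a b c : mset S) : madd (madd a b) c = madd a (madd b c).
Proof. by apply/ffunP=> x; rewrite !ffunE addnA. Qed.

Lemma addclos_add (R : S -> S -> Prop) a b c d :
  addclos R a b -> addclos R c d -> addclos R (madd a c) (madd b d).
Proof.
move=> Rab Rcd; elim: Rab => [|s1 s2 m1 m2 Rs _ IH]; first by rewrite !madd0m.
by rewrite !maddA; apply: addclosS.
Qed.

Lemma addclos_flip (R : S -> S -> Prop) a b :
  addclos R a b -> addclos (fun x y => R y x) b a.
Proof. by elim=> [|s1 s2 m1 m2 Rs _ IH]; constructor. Qed.

End Multisets.

Section Firing.
Variables (S A : finType) (tau : A) (T : seq (trans S A)).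

Lemma fire_split (m m' : mset S) (t : trans S A) : fire m t m' ->
  m = madd (msub m (pre t)) (pre t) /\ m' = madd (msub m (pre t)) (post t).
Proof. by move=> [le_tm ->]; rewrite madd_msubK. Qed.

Lemma fires_split (m m' : mset S) (sigma : seq (trans S A)) :
  fires m sigma m' ->
  msubset (spre sigma) m /\ m' = madd (msub m (spre sigma)) (spost sigma).
Proof.
elim: sigma m => [|t sigma IH] m /=.
  move=> ->; split; first by move=> x; rewrite ffunE.
  by apply/ffunP=> x; rewrite !ffunE; lia.
move=> [m'' [[le_tm ->] /IH [le_sm ->]]]; split.
  by move=> x; have := le_tm x; have := le_sm x; rewrite !ffunE; lia.
by apply/ffunP=> x; have := le_tm x; have := le_sm x; rewrite !ffunE; lia.
Qed.

(* Idling transitions leave the marking unchanged, so they can be dropped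
   from any firing sequence made of net and idling transitions. *)
Lemma fires_drop_idling (m m' : mset S) (sigma : seq (trans S A)) :
  (forall t, t \in sigma -> T_or_idle tau T t) ->
  fires m sigma m' -> fires m [seq t <- sigma | t \in T] m'.
Proof.
elim: sigma m => [|t sigma IH] m //= sigma_ok [m'' [fire_t fires_rest]].
have {}IH := IH m'' (fun u u_in => sigma_ok u (mem_behead (s := t :: sigma) u_in)) fires_rest.
case: ifP => t_in; first by exists m''.
have [|[s def_t]] := sigma_ok t (mem_head _ _); first by rewrite t_in.
move: fire_t; rewrite def_t => -[le_sm def_m''].
by rewrite def_m'' madd_msubK in IH.
Qed.

Lemma tauseq_silent (sigma : seq (trans S A)) : tauseq tau T sigma ->
  forall t, t \in sigma -> T_or_idle tau T t /\ lab t = tau.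
Proof.
move=> [k [_ [sigmas [_ [-> [sigmas_ok _]]]]]] t /flattenP [s s_in t_in].
by have [_ [/(_ t t_in) [? [? _]] _]] := sigmas_ok s s_in.
Qed.

Lemma tauseq_silent_T (m m' : mset S) (sigma : seq (trans S A)) : tauseq tau T sigma -> fires m sigma m' ->
  silent_T_seq tau T [seq t <- sigma | t \in T] /\
  fires m [seq t <- sigma | t \in T] m'.
Proof.
move=> tau_sigma fires_sigma; split; last first.
  by apply: fires_drop_idling fires_sigma => t /(tauseq_silent tau_sigma) [].
split; first by move=> t; rewrite mem_filter => /andP [].
apply/allP=> t; rewrite mem_filter => /andP [_ t_in].
by have [_ ->] := tauseq_silent tau_sigma t_in.
Qed.

End Firing.

Section Transfer.
Variables (S A : finType) (tau : A) (T : seq (trans S A)).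

(* The first clause of a branching place bisimulation, without the Psi
   condition on intermediate markings, which interleaving semantics ignores. *)
Definition place_transfer (R : S -> S -> Prop) : Prop :=
  forall m1 m2, addclos R m1 m2 ->
  forall t1 m1', t1 \in T -> fire m1 t1 m1' ->
     (tau_seq_trans tau t1 /\
      exists sigma m2', tauseq tau T sigma /\ fires m2 sigma m2' /\
        addclos R (pre t1) (spost sigma) /\
        addclos R (post t1) (spost sigma) /\
        addclos R (msub m1 (pre t1)) (msub m2 (spre sigma)))
     \/
     (exists sigma t2 m m2', tauseq tau T sigma /\ t2 \in T /\
        fires m2 sigma m /\ fire m t2 m2' /\
        spost sigma = pre t2 /\ lab t1 = lab t2 /\
        addclos R (pre t1) (spost sigma) /\
        addclos R (post t1) (post t2) /\
        addclos R (msub m1 (pre t1)) (msub m2 (spre sigma))).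

Definition bri_transfer (Q : mset S -> mset S -> Prop) : Prop :=
  forall m1 m2, Q m1 m2 ->
  forall t1 m1', t1 \in T -> fire m1 t1 m1' ->
     (lab t1 = tau /\ exists sigma2 m2', silent_T_seq tau T sigma2 /\
        fires m2 sigma2 m2' /\ Q m1 m2' /\ Q m1' m2')
     \/
     (exists sigma t2 m m2', silent_T_seq tau T sigma /\ t2 \in T /\
        lab t1 = lab t2 /\ fires m2 sigma m /\ fire m t2 m2' /\
        Q m1 m /\ Q m1' m2').

(* A branching place bisimulation satisfies the place transfer property, and
   so does its converse (by its second clause, read through addclos_flip). *)
Lemma place_bisim_transfer (R : S -> S -> Prop) :
  branching_place_bisim tau T R ->
  place_transfer R /\ place_transfer (fun x y => R y x).
Proof.
move=> bisimR; split=> m1 m2 Rm t1 m1' t1_in fire_t1.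
  case: ((bisimR m1 m2 Rm).1 t1 m1' t1_in fire_t1).
    by move=> [? [sigma [m2' [? [? [_ ?]]]]]]; left; split=> //; exists sigma, m2'.
  move=> [sigma [t2 [m [m2' [? [? [? [? [? [? [_ ?]]]]]]]]]]].
  by right; exists sigma, t2, m, m2'.
have Rm' := addclos_flip Rm.
case: ((bisimR m2 m1 Rm').2 t1 m1' t1_in fire_t1).
  move=> [? [sigma [m2' [? [? [_ [? [? ?]]]]]]]].
  left; split=> //; exists sigma, m2'.
  by do !split=> //; apply: addclos_flip.
move=> [sigma [t2 [m [m2' [? [? [? [? [? [? [_ [? [? ?]]]]]]]]]]]]].
right; exists sigma, t2, m, m2'.
by do !split=> //; apply: addclos_flip.
Qed.

(* The core step: place transfer for R yields interleaving transfer for the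
   additive closure of R, since both reached markings are residual + post. *)
Lemma place_to_bri_transfer (R : S -> S -> Prop) :
  place_transfer R -> bri_transfer (addclos R).
Proof.
move=> transR m1 m2 Rm t1 m1' t1_in fire_t1.
have [def_m1 def_m1'] := fire_split fire_t1.
case: (transR m1 m2 Rm t1 m1' t1_in fire_t1).
  move=> [[lab_t1 _] [sigma [m2' [tau_sigma [fires_sigma [Rpre [Rpost Rres]]]]]]].
  have [silent fires_silent] := tauseq_silent_T tau_sigma fires_sigma.
  have [_ def_m2'] := fires_split fires_sigma.
  left; split=> //; exists [seq t <- sigma | t \in T], m2'.
  do 2 split=> //; rewrite def_m2' {1}def_m1 def_m1'.
  by split; apply: addclos_add.
move=> [sigma [t2 [m [m2' [tau_sigma [t2_in [fires_sigma [fire_t2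
         [post_pre [lab_eq [Rpre [Rpost Rres]]]]]]]]]]]].
have [silent fires_silent] := tauseq_silent_T tau_sigma fires_sigma.
have [_ def_m] := fires_split fires_sigma.
have def_m2' : m2' = madd (msub m2 (spre sigma)) (post t2).
  by have [_ ->] := fire_split fire_t2; rewrite def_m post_pre msub_maddK.
right; exists [seq t <- sigma | t \in T], t2, m, m2'.
do 5 split=> //; rewrite def_m2' def_m {1}def_m1 def_m1'.
by split; apply: addclos_add.
Qed.

Lemma bri_transfer_equiv (Q Q' : mset S -> mset S -> Prop) :
  (forall a b, Q a b <-> Q' a b) -> bri_transfer Q -> bri_transfer Q'.
Proof.
move=> QQ' transQ m1 m2 /QQ' Qm t1 m1' t1_in fire_t1.
case: (transQ m1 m2 Qm t1 m1' t1_in fire_t1).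
  move=> [? [sigma [m2' [? [? [/QQ' ? /QQ' ?]]]]]].
  by left; split=> //; exists sigma, m2'.
move=> [sigma [t2 [m [m2' [? [? [? [? [? [/QQ' ? /QQ' ?]]]]]]]]]].
by right; exists sigma, t2, m, m2'.
Qed.

Lemma bri_bisim_of_transfer (Q : mset S -> mset S -> Prop) :
  bri_transfer Q -> bri_transfer (fun x y => Q y x) ->
  branching_interleaving_bisim tau T Q.
Proof.
move=> transQ transQC m1 m2 Qm; split; first exact: transQ.
move=> t2 m2' t2_in fire_t2.
case: (transQC m2 m1 Qm t2 m2' t2_in fire_t2); first by left.
move=> [sigma [t1 [m [m1' [? [? [lab_eq [? [? [? ?]]]]]]]]]].
by right; exists sigma, t1, m, m1'.
Qed.

End Transfer.

Theorem mainTheorem8 (S A : finType) (tau : A) (T : seq (trans S A))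
  (HN : is_net T) (m1 m2 : mset S) :
  place_bisimilar tau T m1 m2 -> bri_bisimilar tau T m1 m2.
Proof.
move=> [R [bisimR Rm]]; exists (addclos R); split=> //.
have [transR transRC] := place_bisim_transfer bisimR.
apply: bri_bisim_of_transfer; first exact: place_to_bri_transfer.
apply: bri_transfer_equiv (place_to_bri_transfer transRC) => a b.
by split=> /addclos_flip.
Qed.
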